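(* The following is a deductive theorem of impredicative second-order logic, for one-place predicates $P_1,P_2$ and two-place relations $\varepsilon_1,\varepsilon_2$: $$\big(\mathsf{LT}(P_1,\varepsilon_1)\wedge \Sigma x\,P_1(x)\wedge\mathsf{LT}(P_2,\varepsilon_2)\wedge\Sigma x\,P_2(x)\big)\to\exists R\Big(\forall v\forall y(R(v,y)\to(P_1(v)\wedge P_2(y)))\wedge\forall v(P_1(v)\to\exists! y\,R(v,y))\wedge\forall y(P_2(y)\to\exists! v\,R(v,y))\wedge\forall v\forall y\forall x\forall z((R(v,y)\wedge R(x,z))\to(v\,\varepsilon_1\,x\leftrightarrow y\,\varepsilon_2\,z))\Big).$$
   Context: For a predicate $P$ and relation $\varepsilon$, define $a\subseteq_\varepsilon b$ as $\forall x(x\,\varepsilon\,a\to x\,\varepsilon\,b)$; $b=\mathrm{pot}_\varepsilon(a)$ as $\forall x(x\,\varepsilon\,b\leftrightarrow\exists c(x\subseteq_\varepsilon c\wedge c\,\varepsilon\,a))$; $h$ is an $\varepsilon$-history iff for every $x$ with $x\,\varepsilon\,h$, $x=\mathrm{pot}_\varepsilon(x\cap_\varepsilon h)$ (where $x\cap_\varepsilon h$ is the $\varepsilon$-set of things $\varepsilon$-in both); $s$ is an $\varepsilon$-level iff $s=\mathrm{pot}_\varepsilon(h)$ for some $\varepsilon$-history $h$. Then $\mathsf{LT}(P,\varepsilon)$ is the conjunction of: (i) $\forall a\forall b((P(a)\wedge P(b)\wedge\forall x(x\,\varepsilon\,a\leftrightarrow x\,\varepsilon\,b))\to a=b)$;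 (ii) $\forall F\forall a(P(a)\to\exists b(P(b)\wedge\forall x(x\,\varepsilon\,b\leftrightarrow(F(x)\wedge x\,\varepsilon\,a))))$; (iii) $\forall a(P(a)\to\exists s(s\text{ is an }\varepsilon\text{-level}\wedge a\subseteq_\varepsilon s))$; (iv) $\forall x\forall y(x\,\varepsilon\,y\to(P(x)\wedge P(y)))$. For a formula $\Phi$, $\Sigma x\,\Phi(x)$ abbreviates $\exists P(\forall x\,\Phi(P(x))\wedge\forall y(\Phi(y)\to\exists!x\,P(x)=y))$, where $P$ is a second-order function variable (a bijection between the universe and the $\Phi$s). *)

(* Second-order logic is rendered with a
   universe of individuals U : Type; one-place predicates are U -> Prop,
   two-place relations are U -> U -> Prop, second-order function variables
   are U -> U. *)

Section LevelTheory.
Variable U : Type.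

Definition subeq (eps : U -> U -> Prop) (a b : U) : Prop :=
  forall x, eps x a -> eps x b.

Definition is_pot (eps : U -> U -> Prop) (b a : U) : Prop :=
  forall x, eps x b <-> exists c, subeq eps x c /\ eps c a.

(* x = pot_ε(x ∩_ε h), with "c ε (x ∩_ε h)" read as "c ε x /\ c ε h" *)
Definition is_pot_cap (eps : U -> U -> Prop) (x h : U) : Prop :=
  forall z, eps z x <-> exists c, subeq eps z c /\ (eps c x /\ eps c h).

Definition history (eps : U -> U -> Prop) (h : U) : Prop :=
  forall x, eps x h -> is_pot_cap eps x h.

Definition level (eps : U -> U -> Prop) (s : U) : Prop :=
  exists h, history eps h /\ is_pot eps s h.

Definition LT (P : U -> Prop) (eps : U -> U -> Prop) : Prop :=
  (forall a b, P a -> P b -> (forall x, eps x a <-> eps x b) -> a = b) /\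
  (forall (F : U -> Prop) a, P a ->
      exists b, P b /\ (forall x, eps x b <-> (F x /\ eps x a))) /\
  (forall a, P a -> exists s, level eps s /\ subeq eps a s) /\
  (forall x y, eps x y -> P x /\ P y).

Definition Sigma (Phi : U -> Prop) : Prop :=
  exists f : U -> U,
    (forall x, Phi (f x)) /\ (forall y, Phi y -> exists! x, f x = y).

End LevelTheory.

Arguments subeq {U}. Arguments is_pot {U}. Arguments is_pot_cap {U}.
Arguments history {U}. Arguments level {U}. Arguments LT {U}. Arguments Sigma {U}.

From Stdlib Require Import Classical.

(* Σ forces P to hold of everything, so ε is an extensional, separative and
   stratified membership relation on the whole universe.  Such a relation is
   well founded, its levels are linearly ordered by ε, and the greatest
   bisimulation between ε1 and ε2 is a partial bijection preserving
   membership, whose domain is closed under subsets and under bounded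
   extension.  If the domain is not everything, then every level missing an
   element of the domain is in the domain, so the domain is bounded by a
   level.  If moreover the bisimulation is onto, Cantor's diagonal set is a
   contradiction; if neither side is exhausted, the elements of the bound
   lying in the domain form a set containing all its subsets, contradicting
   Russell. *)

Definition extensional {U} (e : U -> U -> Prop) : Prop :=
  forall a b, (forall x, e x a <-> e x b) -> a = b.

Definition separation {U} (e : U -> U -> Prop) : Prop :=
  forall (F : U -> Prop) a, exists b, forall x, e x b <-> F x /\ e x a.

Definition stratified {U} (e : U -> U -> Prop) : Prop :=
  forall a, exists s, level e s /\ subeq e a s.

Record levelled {U} (e : U -> U -> Prop) : Prop := {
  levelled_ext : extensional e;
  levelled_sep : separation e;
  levelled_strat : stratified e }.

Arguments levelled_ext {U e}.
Arguments levelled_sep {U e}.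
Arguments levelled_strat {U e}.

Section LevelTheoryWithSigma.
Context {U : Type} {P : U -> Prop} {e : U -> U -> Prop}.

Lemma LT_empty_of_not_P z : LT P e -> ~ P z -> forall x y, ~ e x y.
Proof.
  intros (_ & _ & Hstrat & Hfield) Hz x y Hxy.
  destruct (Hstrat y (proj2 (Hfield x y Hxy))) as (s & (h & _ & Hs) & Hys).
  destruct (proj1 (Hs x) (Hys x Hxy)) as (c & _ & Hch).
  assert (Hzs : e z s).
  { apply Hs. exists c. split; [|exact Hch].
    intros w Hw. exfalso. exact (Hz (proj2 (Hfield w z Hw))). }
  exact (Hz (proj1 (Hfield z s Hzs))).
Qed.

(* Otherwise ε is empty, so all Ps are equal and U, in bijection with them,
   is a singleton. *)
Lemma LT_Sigma_all : LT P e -> Sigma P -> forall z, P z.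
Proof.
  intros HLT (f & Hf & Hbij) z. apply NNPP. intro Hz.
  assert (Hsingle : forall a b, P a -> P b -> a = b).
  { intros a b Ha Hb. apply (proj1 HLT a b Ha Hb). intro x.
    split; intro Hx; exfalso; exact (LT_empty_of_not_P z HLT Hz _ _ Hx). }
  destruct (Hbij (f z) (Hf z)) as (x & _ & Hx).
  assert (Hxz : x = z) by (apply Hx; reflexivity).
  assert (Hxfz : x = f z) by (apply Hx; apply Hsingle; apply Hf).
  apply Hz. rewrite <- Hxz, Hxfz. apply Hf.
Qed.

Lemma LT_levelled : LT P e -> (forall x, P x) -> levelled e.
Proof.
  intros (Hext & Hsep & Hstrat & _) HP. split.
  - intros a b. exact (Hext a b (HP a) (HP b)).
  - intros F a. destruct (Hsep F a (HP a)) as (b & _ & Hb). eauto.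
  - intro a. exact (Hstrat a (HP a)).
Qed.

End LevelTheoryWithSigma.

Section Levels.
Context {U : Type} {e : U -> U -> Prop}.

Lemma Acc_subeq {z c} : subeq e z c -> Acc e c -> Acc e z.
Proof. intros Hzc Hc. constructor. intros m Hm. exact (Acc_inv Hc (Hzc m Hm)). Qed.

Lemma pot_mem {s h c} : is_pot e s h -> e c h -> e c s.
Proof. intros Hs Hc. apply Hs. exists c. split; [intros x Hx; exact Hx | exact Hc]. Qed.

Lemma level_subeq_mem {s y z} : level e s -> e y s -> subeq e z y -> e z s.
Proof.
  intros (h & _ & Hs) Hy Hzy. destruct (proj1 (Hs y) Hy) as (c & Hyc & Hch).
  apply Hs. exists c. split; [|exact Hch]. intros x Hx. exact (Hyc x (Hzy x Hx)).
Qed.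

Lemma level_trans {s y z} : level e s -> e y s -> e z y -> e z s.
Proof.
  intros (h & Hh & Hs) Hy Hzy. destruct (proj1 (Hs y) Hy) as (c & Hyc & Hch).
  destruct (proj1 (Hh c Hch z) (Hyc z Hzy)) as (c' & Hzc' & Hc'c & Hc'h).
  apply Hs. exists c'. split; assumption.
Qed.

Lemma history_trans {h x} : history e h -> Acc e x -> e x h ->
  forall y w, e y x -> e y h -> e w y -> e w h -> e w x.
Proof.
  intros Hh Hx. induction Hx as [x _ IH].
  intros Hxh y w Hyx Hyh Hwy Hwh.
  destruct (proj1 (Hh x Hxh y) Hyx) as (c & Hyc & Hcx & Hch).
  apply (Hh x Hxh w). exists c. split; [|split; assumption].
  intros m Hm. destruct (proj1 (Hh w Hwh m) Hm) as (d & Hmd & Hdw & Hdh).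
  apply (Hh c Hch m). exists d. split; [exact Hmd|]. split; [|exact Hdh].
  exact (IH c Hcx Hch w d (Hyc w Hwy) Hwh Hdw Hdh).
Qed.

Section Separation.
Hypothesis Hsep : separation e.

Lemma separation_not_subset_closed D : ~ (forall S, subeq e S D -> e S D).
Proof.
  intro HD. destruct (Hsep (fun z => ~ e z z) D) as [R HR].
  assert (HRD : e R D) by (apply HD; intros w Hw; apply HR in Hw; tauto).
  pose proof (HR R). tauto.
Qed.

(* Otherwise the members of [x0] lying in every inaccessible member of [h]
   would form a set containing all its subsets. *)
Lemma history_Acc {h x0} : history e h -> e x0 h -> Acc e x0.
Proof.
  intros Hh Hx0. apply NNPP. intro Hx0n.
  assert (Hdescend : forall y, e y h -> ~ Acc e y ->
            exists y', e y' y /\ e y' h /\ ~ Acc e y').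
  { intros y Hy Hyn. apply NNPP. intro Hno. apply Hyn. constructor. intros z Hz.
    destruct (proj1 (Hh y Hy z) Hz) as (c & Hzc & Hcy & Hch).
    apply (Acc_subeq Hzc). apply NNPP. intro Hcn. apply Hno. eauto. }
  destruct (Hsep (fun z => forall y, e y h -> ~ Acc e y -> e z y) x0) as [D HD].
  apply (separation_not_subset_closed D). intros S HS.
  assert (HSy : forall y, e y h -> ~ Acc e y -> e S y).
  { intros y Hy Hyn. destruct (Hdescend y Hy Hyn) as (y' & Hy'y & Hy'h & Hy'n).
    apply (Hh y Hy S). exists y'. split; [|split; assumption].
    intros w Hw. exact (proj1 (proj1 (HD w) (HS w Hw)) y' Hy'h Hy'n). }
  apply HD. split; [exact HSy|]. exact (HSy x0 Hx0 Hx0n).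
Qed.

Lemma stratified_well_founded : stratified e -> well_founded e.
Proof.
  intros Hstrat a. destruct (Hstrat a) as (s & (h & Hh & Hs) & Has).
  constructor. intros z Hz. destruct (proj1 (Hs z) (Has z Hz)) as (c & Hzc & Hch).
  exact (Acc_subeq Hzc (history_Acc Hh Hch)).
Qed.

Hypothesis Hwf : well_founded e.

Lemma history_member_level {h x} : history e h -> e x h -> level e x.
Proof.
  intros Hh Hxh. destruct (Hsep (fun z => e z x) h) as [hx Hhx].
  exists hx. split.
  - intros y Hy. apply Hhx in Hy. destruct Hy as [Hyx Hyh]. intro z. split.
    + intro Hz. destruct (proj1 (Hh y Hyh z) Hz) as (c & Hzc & Hcy & Hch).
      exists c. split; [exact Hzc|]. split; [exact Hcy|]. apply Hhx. split; [|exact Hch].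
      exact (history_trans Hh (Hwf x) Hxh y c Hyx Hyh Hcy Hch).
    + intros (c & Hzc & Hcy & Hchx). apply (Hh y Hyh z). apply Hhx in Hchx.
      exists c. tauto.
  - intro z. split.
    + intro Hz. destruct (proj1 (Hh x Hxh z) Hz) as (c & Hzc & Hcx & Hch).
      exists c. split; [exact Hzc|]. apply Hhx. split; assumption.
    + intros (c & Hzc & Hc). apply Hhx in Hc. apply (Hh x Hxh z). exists c. tauto.
Qed.

Hypothesis Hext : extensional e.

Lemma level_trichotomy {s t} : level e s -> level e t -> e s t \/ s = t \/ e t s.
Proof.
  revert t. induction (Hwf s) as [s _ IHs]. intro t. induction (Hwf t) as [t _ IHt].
  intros Ls Lt.
  destruct (classic (e s t)) as [Hst|Hst]; [left; exact Hst|].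
  destruct (classic (e t s)) as [Hts|Hts]; [right; right; exact Hts|].
  right; left. apply Hext. intro z.
  pose proof Ls as (h & Hh & Hsh). pose proof Lt as (k & Hk & Htk).
  split; intro Hz.
  - destruct (proj1 (Hsh z) Hz) as (x & Hzx & Hxh).
    pose proof (pot_mem Hsh Hxh) as Hxs.
    destruct (IHs x Hxs t (history_member_level Hh Hxh) Lt) as [Hxt|[->|Htx]].
    + exact (level_subeq_mem Lt Hxt Hzx).
    + contradiction.
    + exfalso. exact (Hts (level_trans Ls Hxs Htx)).
  - destruct (proj1 (Htk z) Hz) as (y & Hzy & Hyk).
    pose proof (pot_mem Htk Hyk) as Hyt.
    destruct (IHt y Hyt Ls (history_member_level Hk Hyk)) as [Hys|[<-|Hsy]].
    + exfalso. exact (Hst (level_trans Lt Hyt Hys)).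
    + contradiction.
    + exact (level_subeq_mem Ls Hsy Hzy).
Qed.

Lemma level_mem_of_nmem {x t y} : level e x -> level e t -> e y t -> ~ e y x -> e x t.
Proof.
  intros Lx Lt Hyt Hyx.
  destruct (level_trichotomy Lx Lt) as [Hxt|[->|Htx]]; [exact Hxt|contradiction|].
  exfalso. exact (Hyx (level_trans Lx Htx Hyt)).
Qed.

End Separation.

End Levels.

Lemma levelled_wf {U} {e : U -> U -> Prop} : levelled e -> well_founded e.
Proof. intro L. exact (stratified_well_founded (levelled_sep L) (levelled_strat L)). Qed.

Definition bisimulation {U} (e1 e2 : U -> U -> Prop) (S : U -> U -> Prop) : Prop :=
  forall a b, S a b ->
    (forall a', e1 a' a -> exists b', e2 b' b /\ S a' b') /\
    (forall b', e2 b' b -> exists a', e1 a' a /\ S a' b').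

Definition bisimilar {U} (e1 e2 : U -> U -> Prop) (a b : U) : Prop :=
  exists S, bisimulation e1 e2 S /\ S a b.

Section Bisimilarity.
Context {U : Type} {e1 e2 : U -> U -> Prop}.

Lemma bisimilar_forth {a b a'} :
  bisimilar e1 e2 a b -> e1 a' a -> exists b', e2 b' b /\ bisimilar e1 e2 a' b'.
Proof.
  intros (S & HS & Hab) Ha'. destruct (proj1 (HS a b Hab) a' Ha') as (b' & Hb' & Hab').
  exists b'. split; [exact Hb'|]. exists S. split; assumption.
Qed.

Lemma bisimilar_back {a b b'} :
  bisimilar e1 e2 a b -> e2 b' b -> exists a', e1 a' a /\ bisimilar e1 e2 a' b'.
Proof.
  intros (S & HS & Hab) Hb'. destruct (proj2 (HS a b Hab) b' Hb') as (a' & Ha' & Hab').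
  exists a'. split; [exact Ha'|]. exists S. split; assumption.
Qed.

Lemma bisimilar_sym {a b} : bisimilar e2 e1 b a -> bisimilar e1 e2 a b.
Proof.
  intros (S & HS & Hba). exists (fun x y => S y x). split; [|exact Hba].
  intros x y Hyx. destruct (HS y x Hyx) as [Hforth Hback]. split; assumption.
Qed.

Lemma bisimilar_of_members {a t} : separation e2 ->
  (forall a', e1 a' a -> exists b', bisimilar e1 e2 a' b') ->
  (forall a' b', e1 a' a -> bisimilar e1 e2 a' b' -> e2 b' t) ->
  exists b, bisimilar e1 e2 a b.
Proof.
  intros Hsep2 Hall Ht.
  destruct (Hsep2 (fun x => exists a', e1 a' a /\ bisimilar e1 e2 a' x) t) as [b Hb].
  exists b, (fun x y => bisimilar e1 e2 x y \/ (x = a /\ y = b)).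
  split; [|right; split; reflexivity].
  intros x y [Hxy | [-> ->]]; split.
  - intros a' Ha'. destruct (bisimilar_forth Hxy Ha') as (b' & ? & ?). eauto.
  - intros b' Hb'. destruct (bisimilar_back Hxy Hb') as (a' & ? & ?). eauto.
  - intros a' Ha'. destruct (Hall a' Ha') as [b' Hb'].
    exists b'. split; [|left; exact Hb']. apply Hb. split; eauto.
  - intros b' Hb'. destruct (proj1 (Hb b') Hb') as [(a' & ? & ?) _]. eauto.
Qed.

Lemma bisimilar_functional {a b b'} : extensional e2 -> well_founded e1 ->
  bisimilar e1 e2 a b -> bisimilar e1 e2 a b' -> b = b'.
Proof.
  intros Hext Hwf. revert b b'. induction (Hwf a) as [a _ IH].
  assert (Hsub : forall b b', bisimilar e1 e2 a b -> bisimilar e1 e2 a b' ->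
                   forall x, e2 x b -> e2 x b').
  { intros b b' Hb Hb' x Hx.
    destruct (bisimilar_back Hb Hx) as (a' & Ha' & Ha'x).
    destruct (bisimilar_forth Hb' Ha') as (x' & Hx' & Ha'x').
    rewrite (IH a' Ha' x x' Ha'x Ha'x'). exact Hx'. }
  intros b b' Hb Hb'. apply Hext. intro x. split; apply Hsub; assumption.
Qed.

End Bisimilarity.

Lemma bisimilar_injective {U} {e1 e2 : U -> U -> Prop} {a a' b} :
  extensional e1 -> well_founded e2 ->
  bisimilar e1 e2 a b -> bisimilar e1 e2 a' b -> a = a'.
Proof.
  intros Hext Hwf Hab Ha'b.
  exact (bisimilar_functional Hext Hwf (bisimilar_sym Hab) (bisimilar_sym Ha'b)).
Qed.

Section LevelledBisimilarity.
Context {U : Type} {e1 e2 : U -> U -> Prop}.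
Hypotheses (L1 : levelled e1) (L2 : levelled e2).

Lemma bisimilar_mem_iff {v y x z} :
  bisimilar e1 e2 v y -> bisimilar e1 e2 x z -> (e1 v x <-> e2 y z).
Proof.
  intros Hvy Hxz. split; intro H.
  - destruct (bisimilar_forth Hxz H) as (y' & Hy' & Hvy').
    rewrite (bisimilar_functional (levelled_ext L2) (levelled_wf L1) Hvy Hvy'). exact Hy'.
  - destruct (bisimilar_back Hxz H) as (v' & Hv' & Hv'y).
    rewrite (bisimilar_injective (levelled_ext L1) (levelled_wf L2) Hvy Hv'y). exact Hv'.
Qed.

Lemma bisimilar_subeq_iff {x y z w} :
  bisimilar e1 e2 x y -> bisimilar e1 e2 z w -> (subeq e1 z x <-> subeq e2 w y).
Proof.
  intros Hxy Hzw. split; intros H m Hm.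
  - destruct (bisimilar_back Hzw Hm) as (m1 & Hm1 & Hm1m).
    exact (proj1 (bisimilar_mem_iff Hm1m Hxy) (H m1 Hm1)).
  - destruct (bisimilar_forth Hzw Hm) as (m2 & Hm2 & Hmm2).
    exact (proj2 (bisimilar_mem_iff Hmm2 Hxy) (H m2 Hm2)).
Qed.

Lemma bisimilar_subeq_dom {x y z} :
  bisimilar e1 e2 x y -> subeq e1 z x -> exists w, bisimilar e1 e2 z w.
Proof.
  intros Hxy Hzx. apply (bisimilar_of_members (t := y) (levelled_sep L2)).
  - intros a' Ha'. destruct (bisimilar_forth Hxy (Hzx a' Ha')) as (b' & _ & Hab'). eauto.
  - intros a' b' Ha' Hab'. exact (proj1 (bisimilar_mem_iff Hab' Hxy) (Hzx a' Ha')).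
Qed.

End LevelledBisimilarity.

(* [is_pot e s h] and [is_pot_cap e x h] are convertible to the instances
   [C := fun c => e c h] and [C := fun c => e c x /\ e c h]. *)
Definition pot_of {U} (e : U -> U -> Prop) (s : U) (C : U -> Prop) : Prop :=
  forall z, e z s <-> exists c, subeq e z c /\ C c.

Section LevelTransfer.
Context {U : Type} {e1 e2 : U -> U -> Prop}.
Hypotheses (L1 : levelled e1) (L2 : levelled e2).

Lemma bisimilar_pot_of {s s2} {C1 C2 : U -> Prop} :
  bisimilar e1 e2 s s2 ->
  (forall c, C1 c -> exists c2, C2 c2 /\ bisimilar e1 e2 c c2) ->
  (forall c2, C2 c2 -> exists c, C1 c /\ bisimilar e1 e2 c c2) ->
  pot_of e1 s C1 -> pot_of e2 s2 C2.
Proof.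
  intros Hss2 HC1 HC2 Hs z2. split.
  - intro Hz2. destruct (bisimilar_back Hss2 Hz2) as (z & Hzs & Hzz2).
    destruct (proj1 (Hs z) Hzs) as (c & Hzc & Hc).
    destruct (HC1 c Hc) as (c2 & Hc2 & Hcc2).
    exists c2. split; [|exact Hc2]. exact (proj1 (bisimilar_subeq_iff L1 L2 Hcc2 Hzz2) Hzc).
  - intros (c2 & Hz2c2 & Hc2). destruct (HC2 c2 Hc2) as (c & Hc & Hcc2).
    destruct (bisimilar_subeq_dom L2 L1 (bisimilar_sym Hcc2) Hz2c2) as [z Hz2z].
    apply bisimilar_sym in Hz2z.
    apply (proj1 (bisimilar_mem_iff L1 L2 Hz2z Hss2)). apply Hs. exists c. split; [|exact Hc].
    exact (proj2 (bisimilar_subeq_iff L1 L2 Hcc2 Hz2z) Hz2c2).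
Qed.

Lemma bisimilar_is_pot {s s2 h h2} :
  bisimilar e1 e2 s s2 -> bisimilar e1 e2 h h2 -> is_pot e1 s h -> is_pot e2 s2 h2.
Proof.
  intros Hss2 Hhh2.
  apply (bisimilar_pot_of Hss2 (C1 := fun c => e1 c h) (C2 := fun c2 => e2 c2 h2)).
  - intros c Hc. exact (bisimilar_forth Hhh2 Hc).
  - intros c2 Hc2. exact (bisimilar_back Hhh2 Hc2).
Qed.

Lemma bisimilar_history {h h2} : history e1 h -> bisimilar e1 e2 h h2 -> history e2 h2.
Proof.
  intros Hh Hhh2 y2 Hy2. destruct (bisimilar_back Hhh2 Hy2) as (y & Hyh & Hyy2).
  apply (bisimilar_pot_of Hyy2 (C1 := fun c => e1 c y /\ e1 c h)
                              (C2 := fun c2 => e2 c2 y2 /\ e2 c2 h2)).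
  - intros c [Hcy Hch]. destruct (bisimilar_forth Hyy2 Hcy) as (c2 & Hc2 & Hcc2).
    exists c2. split; [split; [exact Hc2|]|exact Hcc2].
    exact (proj1 (bisimilar_mem_iff L1 L2 Hcc2 Hhh2) Hch).
  - intros c2 [Hc2 Hc2h2]. destruct (bisimilar_back Hyy2 Hc2) as (c & Hcy & Hcc2).
    exists c. split; [split; [exact Hcy|]|exact Hcc2].
    exact (proj2 (bisimilar_mem_iff L1 L2 Hcc2 Hhh2) Hc2h2).
  - exact (Hh y Hyh).
Qed.

Lemma bisimilar_level {s s2} : level e1 s -> bisimilar e1 e2 s s2 -> level e2 s2.
Proof.
  intros (h & Hh & Hs) Hss2.
  destruct (bisimilar_subeq_dom L1 L2 Hss2 (fun c Hc => pot_mem Hs Hc)) as [h2 Hhh2].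
  exists h2. split.
  - exact (bisimilar_history Hh Hhh2).
  - exact (bisimilar_is_pot Hss2 Hhh2 Hs).
Qed.

(* Each [x] in the history of [c] misses some member of [w], hence is in the
   domain by induction, with image in a fixed level above the image of [w]. *)
Lemma bisimilar_level_of_nmem {w w2 c} :
  bisimilar e1 e2 w w2 -> level e1 c -> ~ e1 w c -> exists c2, bisimilar e1 e2 c c2.
Proof.
  revert w2 c. induction (levelled_wf L1 w) as [w _ IH].
  intros w2 c Hww2 (h & Hh & Hc) Hwc.
  destruct (levelled_strat L2 w2) as (t2 & Lt2 & Hw2t2).
  assert (Hbelow : forall x, e1 x h -> exists x2, bisimilar e1 e2 x x2 /\ e2 x2 t2).
  { intros x Hxh.
    assert (Hwx : exists wx, e1 wx w /\ ~ e1 wx x).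
    { apply NNPP. intro Hno. apply Hwc, Hc. exists x. split; [|exact Hxh].
      intros m Hm. apply NNPP. intro Hmx. apply Hno. eauto. }
    destruct Hwx as (wx & Hwxw & Hwxx).
    pose proof (history_member_level (levelled_sep L1) (levelled_wf L1) Hh Hxh) as Lx.
    destruct (bisimilar_forth Hww2 Hwxw) as (wx2 & Hwx2 & Hwxwx2).
    destruct (IH wx Hwxw wx2 x Hwxwx2 Lx Hwxx) as [x2 Hxx2].
    exists x2. split; [exact Hxx2|].
    apply (level_mem_of_nmem (levelled_sep L2) (levelled_wf L2) (levelled_ext L2)
             (bisimilar_level Lx Hxx2) Lt2 (Hw2t2 wx2 Hwx2)).
    intro H. exact (Hwxx (proj2 (bisimilar_mem_iff L1 L2 Hwxwx2 Hxx2) H)). }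
  apply (bisimilar_of_members (t := t2) (levelled_sep L2)).
  - intros z Hz. destruct (proj1 (Hc z) Hz) as (x & Hzx & Hxh).
    destruct (Hbelow x Hxh) as (x2 & Hxx2 & _).
    exact (bisimilar_subeq_dom L1 L2 Hxx2 Hzx).
  - intros z z2 Hz Hzz2. destruct (proj1 (Hc z) Hz) as (x & Hzx & Hxh).
    destruct (Hbelow x Hxh) as (x2 & Hxx2 & Hx2t2).
    exact (level_subeq_mem Lt2 Hx2t2 (proj1 (bisimilar_subeq_iff L1 L2 Hxx2 Hzz2) Hzx)).
Qed.

Lemma bisimilar_dom_bounded : ~ (forall a, exists b, bisimilar e1 e2 a b) ->
  exists s, forall d b, bisimilar e1 e2 d b -> e1 d s.
Proof.
  intro Hn. destruct (not_all_ex_not _ _ Hn) as [a Ha].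
  destruct (levelled_strat L1 a) as (s & Ls & Has).
  exists s. intros d b Hdb. apply NNPP. intro Hds.
  destruct (bisimilar_level_of_nmem Hdb Ls Hds) as [s2 Hss2].
  exact (Ha (bisimilar_subeq_dom L1 L2 Hss2 Has)).
Qed.

End LevelTransfer.

Section Totality.
Context {U : Type} {e1 e2 : U -> U -> Prop}.
Hypotheses (L1 : levelled e1) (L2 : levelled e2).

(* Cantor: the diagonal set of domain elements not in their image would be an
   image itself. *)
Lemma bisimilar_total_of_onto :
  (forall b, exists a, bisimilar e1 e2 a b) -> forall a, exists b, bisimilar e1 e2 a b.
Proof.
  intro Honto. apply NNPP. intro Hn.
  destruct (bisimilar_dom_bounded L1 L2 Hn) as [s Hs].
  destruct (levelled_sep L1 (fun m => exists b, bisimilar e1 e2 m b /\ ~ e1 m b) s)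
    as [D HD].
  destruct (Honto D) as [m HmD].
  destruct (classic (e1 m D)) as [H|H].
  - destruct (proj1 (HD m) H) as [(b & Hmb & Hnb) _].
    rewrite <- (bisimilar_functional (levelled_ext L2) (levelled_wf L1) HmD Hmb) in Hnb.
    contradiction.
  - apply H, HD. split; [exists D; split; assumption|]. exact (Hs m D HmD).
Qed.

Lemma bisimilar_total_or_onto :
  (forall a, exists b, bisimilar e1 e2 a b) \/ (forall b, exists a, bisimilar e1 e2 a b).
Proof.
  apply NNPP. intro Hn. apply not_or_and in Hn as [Hn1 Hn2].
  destruct (bisimilar_dom_bounded L1 L2 Hn1) as [s1 Hs1].
  destruct (bisimilar_dom_bounded L2 L1) as [s2 Hs2].
  { intro H. apply Hn2. intro b. destruct (H b) as [a Ha].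
    exists a. exact (bisimilar_sym Ha). }
  destruct (levelled_sep L1 (fun x => exists b, bisimilar e1 e2 x b) s1) as [D HD].
  apply (separation_not_subset_closed (levelled_sep L1) D). intros S HS.
  assert (HSdom : exists b, bisimilar e1 e2 S b).
  { apply (bisimilar_of_members (t := s2) (levelled_sep L2)).
    - intros a' Ha'. exact (proj1 (proj1 (HD a') (HS a' Ha'))).
    - intros a' b' _ Hab'. exact (Hs2 b' a' (bisimilar_sym Hab')). }
  apply HD. split; [exact HSdom|]. destruct HSdom as [b Hb]. exact (Hs1 S b Hb).
Qed.

Lemma bisimilar_total : forall a, exists b, bisimilar e1 e2 a b.
Proof.
  destruct bisimilar_total_or_onto as [Htotal|Honto]; [exact Htotal|].
  exact (bisimilar_total_of_onto Honto).
Qed.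

End Totality.

Theorem theorem25 (U : Type) (P1 P2 : U -> Prop) (eps1 eps2 : U -> U -> Prop) :
  (LT P1 eps1 /\ Sigma P1 /\ LT P2 eps2 /\ Sigma P2) ->
  exists R : U -> U -> Prop,
    (forall v y, R v y -> P1 v /\ P2 y) /\
    (forall v, P1 v -> exists! y, R v y) /\
    (forall y, P2 y -> exists! v, R v y) /\
    (forall v y x z, R v y -> R x z -> (eps1 v x <-> eps2 y z)).
Proof.
  intros (LT1 & Sig1 & LT2 & Sig2).
  pose proof (LT_Sigma_all LT1 Sig1) as All1.
  pose proof (LT_Sigma_all LT2 Sig2) as All2.
  pose proof (LT_levelled LT1 All1) as L1.
  pose proof (LT_levelled LT2 All2) as L2.
  exists (bisimilar eps1 eps2). split; [|split; [|split]].
  - intros v y _. split; [apply All1 | apply All2].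
  - intros v _. destruct (bisimilar_total L1 L2 v) as [y Hy].
    exists y. split; [exact Hy|]. intros y' Hy'.
    exact (bisimilar_functional (levelled_ext L2) (levelled_wf L1) Hy Hy').
  - intros y _. destruct (bisimilar_total L2 L1 y) as [v Hv].
    exists v. split; [exact (bisimilar_sym Hv)|]. intros v' Hv'.
    exact (bisimilar_injective (levelled_ext L1) (levelled_wf L2) (bisimilar_sym Hv) Hv').
  - intros v y x z. exact (bisimilar_mem_iff L1 L2).
Qed.
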